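(* For all planar forests $F,G$: $F\leq G$ if and only if $m(G)\leq m(F)$.
   Context: Planar rooted trees have their children linearly ordered left to right; $\mathbf{F}$ is the set of planar forests (finite, possibly empty, sequences $t_1\cdots t_n$ of planar rooted trees; $1$ = empty forest; product = concatenation). $B^+(F)$ is the tree obtained by grafting the trees of $F$ on a new common root. $m:\mathbf{F}\to\mathbf{F}$ is the map defined recursively by $m(1)=1$ and $m(B^+(F_1)F_2)=B^+(m(F_2))m(F_1)$. Order on $\mathbf{F}$: an admissible transformation of a forest: choose a vertex $s$ which is the leftmost child of its parent $u$; if $u$ is not a root, with parent $r$, move the subtree rooted at $s$ to become a child of $r$ immediately to the left of $u$; if $u$ is a root, move the subtree rooted at $s$ to become a new tree of the forest immediately to the left of the tree of $u$; everything else unchanged. $F\leq G$ iff $G$ is obtained from $F$ by a finite (possibly empty) sequence of admissible transformations. *)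

From Stdlib Require Import List Relations Arith Lia.
Import ListNotations.

(* A planar rooted tree is a root together with the (ordered, left to right)
   planar forest of subtrees grafted on it: Node F = B^+(F). *)
Inductive tree : Type := Node : list tree -> tree.

(* Planar forests: finite sequences of planar rooted trees; [] = 1,
   product = concatenation. *)
Definition forest := list tree.

Definition Bplus (F : forest) : tree := Node F.

Fixpoint tsize (t : tree) : nat :=
  match t with Node F => S (fold_right (fun u n => tsize u + n) 0 F) end.
Definition fsize (F : forest) : nat := fold_right (fun u n => tsize u + n) 0 F.

(* m(1) = 1, m(B^+(F1) F2) = B^+(m(F2)) m(F1).
   Defined by recursion on a fuel parameter (the recursion is not structural
   for Rocq's guard checker); fuel fsize F suffices, since each recursive call
   is on a forest with strictly fewer vertices. *)
Fixpoint m_fuel (n : nat) (F : forest) : forest :=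
  match n with
  | 0 => []
  | S n' =>
    match F with
    | [] => []
    | Node F1 :: F2 => Node (m_fuel n' F2) :: m_fuel n' F1
    end
  end.

Definition m (F : forest) : forest := m_fuel (fsize F) F.

(* One admissible transformation.
   adm_root: s is the leftmost child of a root u (u = Node (s :: C)); s becomes
             a new tree immediately to the left of the tree of u.
   adm_deep: the transformation happens inside the subtree forest of a vertex r
             (if u is a child of r, then u is a root of that forest and the
             adm_root move inside it is exactly moving s to become a child of r
             immediately left of u). *)
Inductive adm : forest -> forest -> Prop :=
  | adm_root : forall (A B C : forest) (s : tree),
      adm (A ++ Node (s :: C) :: B) (A ++ s :: Node C :: B)
  | adm_deep : forall (A B F F' : forest),
      adm F F' -> adm (A ++ Node F :: B) (A ++ Node F' :: B).

Definition fle (F G : forest) : Prop := clos_refl_trans forest adm F G.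

Lemma m_fuel_stable : forall n k F, fsize F <= n -> fsize F <= k ->
  m_fuel n F = m_fuel k F.
Proof.
  induction n as [|n IH]; intros k F Hn Hk.
  - destruct F as [|[F1] F2]; [destruct k; reflexivity|].
    simpl in Hn; lia.
  - destruct F as [|[F1] F2]; [destruct k; reflexivity|].
    destruct k as [|k]; [simpl in Hk; lia|].
    simpl in Hn, Hk |- *.
    change (fold_right (fun u n => tsize u + n) 0 F1) with (fsize F1) in *.
    change (fold_right (fun u n => tsize u + n) 0 F2) with (fsize F2) in *.
    rewrite (IH k F2) by lia. rewrite (IH k F1) by lia. reflexivity.
Qed.

Lemma m_nil : m [] = [].
Proof. reflexivity. Qed.

Lemma m_cons : forall F1 F2, m (Bplus F1 :: F2) = Bplus (m F2) :: m F1.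
Proof.
  intros F1 F2. unfold m at 1. simpl.
  change (fold_right (fun u n => tsize u + n) 0 F1) with (fsize F1).
  change (fold_right (fun u n => tsize u + n) 0 F2) with (fsize F2).
  unfold m, Bplus. rewrite (m_fuel_stable _ (fsize F2) F2) by lia.
  rewrite (m_fuel_stable _ (fsize F1) F1) by lia. reflexivity.
Qed.

(* Every admissible transformation of a nonempty forest [Node F1 :: F2] is of
   one of three kinds: the root move at the head tree
   [Node (Node a :: b) :: c -> Node a :: Node b :: c], a transformation inside
   the head's subforest [F1], or one inside the tail [F2].  Since
   [m (Node F1 :: F2) = Node (m F2) :: m F1], the map [m] exchanges the last two
   kinds and sends the root move to the root move read backwards; hence [m]
   reverses the order, and as [m] is an involution the reversal is an
   equivalence. *)

From Stdlib Require Import List Relations Lia.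
Import ListNotations.

Lemma m_involutive_bounded (n : nat) (F : forest) : fsize F <= n -> m (m F) = F.
Proof.
  revert F; induction n as [|n IH]; intros [|[F1] F2] Hsize; try reflexivity;
    simpl in Hsize; fold (fsize F1) (fsize F2) in Hsize; [lia|].
  rewrite !m_cons, !IH by lia.
  reflexivity.
Qed.

Lemma m_involutive (F : forest) : m (m F) = F.
Proof. exact (m_involutive_bounded (fsize F) F (le_n _)). Qed.

Inductive adm_local : forest -> forest -> Prop :=
  | adm_local_root (a b c : forest) :
      adm_local (Node (Node a :: b) :: c) (Node a :: Node b :: c)
  | adm_local_head (F F' c : forest) :
      adm_local F F' -> adm_local (Node F :: c) (Node F' :: c)
  | adm_local_tail (t : tree) (c c' : forest) :
      adm_local c c' -> adm_local (t :: c) (t :: c').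

Lemma adm_cons (t : tree) (F G : forest) : adm F G -> adm (t :: F) (t :: G).
Proof.
  intros [A B C s | A B F0 F0' H].
  - exact (adm_root (t :: A) B C s).
  - exact (adm_deep (t :: A) B _ _ H).
Qed.

Lemma adm_localP (F G : forest) : adm F G <-> adm_local F G.
Proof.
  split.
  - induction 1 as [A B C [s] | A B F0 F0' _ IH];
      induction A as [|t A IHA]; simpl; constructor; assumption.
  - induction 1 as [a b c | F0 F0' c _ IH | t c c' _ IH].
    + exact (adm_root [] c b (Node a)).
    + exact (adm_deep [] c _ _ IH).
    + exact (adm_cons t _ _ IH).
Qed.

Lemma adm_local_m (F G : forest) : adm_local F G -> adm_local (m G) (m F).
Proof.
  induction 1 as [a b c | F0 F0' c _ IH | [t] c c' _ IH];
    rewrite ?m_cons.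
  - constructor.
  - now apply adm_local_tail.
  - now apply adm_local_head.
Qed.

Lemma fle_m (F G : forest) : fle F G -> fle (m G) (m F).
Proof.
  induction 1 as [F G Hadm | F | F G H _ IHFG _ IHGH].
  - now apply rt_step, adm_localP, adm_local_m, adm_localP.
  - apply rt_refl.
  - exact (rt_trans _ _ _ _ _ IHGH IHFG).
Qed.

Theorem proposition36 : forall F G : forest, fle F G <-> fle (m G) (m F).
Proof.
  intros F G; split; [apply fle_m|].
  intros HmGF; rewrite <- (m_involutive F), <- (m_involutive G).
  now apply fle_m.
Qed.
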